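(* Let \(E\in\mathcal{B}_\infty\) be \(\sigma\)-finite for \(\mu\). Then \((E,\mu)\) is purely nonatomic.
   Context: Let $\mathcal{B}$ be the Borel $\sigma$-algebra of $\mathbb{R}$, $\lambda$ the Lebesgue measure, and $\mathcal{B}_{\infty}$ the $\sigma$-algebra on $\mathbb{R}^{\mathbb{N}}$ generated by the cylinder sets $\prod_{i=1}^{m}C_{i}\times\prod_{i=m+1}^{\infty}\mathbb{R}$ with $C_i\in\mathcal{B}$, $m\in\mathbb{N}$. Let $\mathcal{F}(\mathcal{B},\lambda)$ be the set of finite rectangles $\prod_{i\in\mathbb{N}}C_{i}$ with $C_i\in\mathcal{B}$ and $\prod_{i}\lambda(C_i)\in[0,\infty)$, with $\mathrm{vol}(\prod_{i}C_i):=\prod_i\lambda(C_i)$. The measure $\mu$ is the restriction to $\mathcal{B}_{\infty}$ of the outer measure $\mu^{\ast}(A):=\inf\{\sum_{n}\mathrm{vol}(\mathscr{C}_{n}) : \mathscr{C}_{n}\in\mathcal{F}(\mathcal{B},\lambda),\ A\subset\bigcup_{n}\mathscr{C}_{n}\}$ ($\inf\varnothing=\infty$). A measure space is purely nonatomic if it has no atoms, i.e., no measurable $A$ with positive measure such that every measurable $B\subset A$ has measure $0$ or that of $A$. *)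

From HB Require Import structures.
From mathcomp Require Import all_boot all_order all_algebra.
From mathcomp Require Import all_classical all_reals all_analysis.
Set Implicit Arguments. Unset Strict Implicit. Unset Printing Implicit Defensive.
Import Order.TTheory GRing.Theory Num.Theory.
Local Open Scope classical_set_scope.
Local Open Scope ring_scope.

Section Rinf.
Variable R : realType.

Definition cylinder (A : set (nat -> R)) : Prop :=
  exists (m : nat) (C : nat -> set R),
    (forall i, measurable (C i)) /\
    A = [set x | forall i, (i < m)%N -> C i (x i)].

Definition Binf : set (set (nat -> R)) := <<s cylinder >>.

Definition rect (C : nat -> set R) : set (nat -> R) :=
  [set x | forall i, C i (x i)].

Definition partial_vol (C : nat -> set R) (n : nat) : \bar R :=
  (\prod_(i < n) (@lebesgue_measure R) (C i))%E.

Definition finrect (C : nat -> set R) (v : R) : Prop :=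
  (forall i, measurable (C i)) /\ partial_vol C @ \oo --> v%:E.

(* Outer measure mu^* ; inf of the empty set is +oo. *)
Definition mu_star (A : set (nat -> R)) : \bar R :=
  ereal_inf [set s : \bar R | exists (C : nat -> nat -> set R) (v : nat -> R),
     (forall n, finrect (C n) (v n)) /\
     A `<=` \bigcup_n rect (C n) /\
     s = (\sum_(0 <= n <oo) (v n)%:E)%E].

(* mu = restriction of mu^* to B_infinity. *)
Definition sigma_finite_mu (E : set (nat -> R)) : Prop :=
  exists F : nat -> set (nat -> R),
    E = \bigcup_n F n /\ forall n, Binf (F n) /\ (mu_star (F n) < +oo)%E.

Definition purely_nonatomic (E : set (nat -> R)) : Prop :=
  ~ exists A : set (nat -> R),
      [/\ Binf A, A `<=` E, (0 < mu_star A)%E &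
        forall B, Binf B -> B `<=` A -> mu_star B = 0%E \/ mu_star B = mu_star A].

End Rinf.

From HB Require Import structures.
From mathcomp Require Import all_boot all_order all_algebra.
From mathcomp Require Import all_classical all_reals all_analysis.
From mathcomp Require Import ring lra.
Set Implicit Arguments. Unset Strict Implicit. Unset Printing Implicit Defensive.
Import Order.TTheory GRing.Theory Num.Theory.
Local Open Scope classical_set_scope.
Local Open Scope ring_scope.

(* An atom A of finite measure m > 0 is impossible: cover A by finite
   rectangles and slice the first factor of each rectangle along a grid of
   small mesh; this re-covers A by rectangles of volume < m, whose traces on A
   are null by atomicity, so A is null by countable subadditivity.  An atom of
   infinite measure is ruled out the same way, using the pieces of finite
   measure that exhaust E. *)

Section nneseries_pair.
Local Open Scope ereal_scope.
Context {R : realType}.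

Lemma nneseries_pair (f : {bij [set: nat] >-> [set: nat * nat]})
    (a : nat -> nat -> \bar R) : (forall i j, 0 <= a i j) ->
  \sum_(k <oo) a (f k).1 (f k).2 = \sum_(i <oo) \sum_(j <oo) a i j.
Proof.
move=> a0; rewrite nneseries_esumT //.
rewrite -(reindex_esum [set: nat] [set: nat * nat] f (fun p => a p.1 p.2)) //.
under eq_eseriesr do rewrite nneseries_esumT //.
rewrite nneseries_esumT; last by move=> i; exact: esum_ge0.
by rewrite esum_esum //; congr esum; apply/seteqP; split.
Qed.

End nneseries_pair.

Section infinite_product.
Variable R : realType.
Implicit Types (A B : set (nat -> R)) (C : nat -> set R) (v : R).
Local Notation lambda := (@lebesgue_measure R).

Lemma Binf_bigcap (F : (set (nat -> R))^nat) :
  (forall n, Binf (F n)) -> Binf (\bigcap_n F n).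
Proof.
move=> BF; rewrite -[X in Binf X]setCK setC_bigcap -setTD.
apply: sigma_algebraCD; apply: sigma_algebra_bigcup => n.
by rewrite -setTD; exact: sigma_algebraCD (BF n).
Qed.

Lemma BinfI A B : Binf A -> Binf B -> Binf (A `&` B).
Proof.
have [_ _ _ setI_closed_Binf] := (sigma_algebraP (fun X _ => @subsetT _ X)).1
  (smallest_sigma_algebra setT (@cylinder R)).
exact: setI_closed_Binf.
Qed.

Lemma Binf_rect C : (forall i, measurable (C i)) -> Binf (rect C).
Proof.
move=> mC; have -> : rect C = \bigcap_m [set x | forall i, (i < m)%N -> C i (x i)].
  apply/seteqP; split => [x Cx m _ i _ //|x Cx i].
  exact: (Cx i.+1 I i (ltnSn i)).
by apply: Binf_bigcap => m; apply: sub_sigma_algebra; exists m, C.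
Qed.

Local Open Scope ereal_scope.

Definition rect_cover A (C : nat -> nat -> set R) (v : nat -> R) :=
  (forall n, finrect (C n) (v n)) /\ A `<=` \bigcup_n rect (C n).

Lemma mu_star_le_cover A (C : nat -> nat -> set R) (v : nat -> R) :
  rect_cover A C v -> mu_star A <= \sum_(n <oo) (v n)%:E.
Proof. by move=> [fC AC]; apply: ereal_inf_lbound; exists C, v. Qed.

Lemma mu_star_lt_cover A x : mu_star A < x ->
  exists (C : nat -> nat -> set R) (v : nat -> R),
    rect_cover A C v /\ \sum_(n <oo) (v n)%:E < x.
Proof. by move=> /ereal_inf_lt[_ [C [v [fC [AC ->]]]] lt]; exists C, v. Qed.

Lemma finrect_ge0 C v : finrect C v -> (0 <= v)%R.
Proof.
case=> mC cv; rewrite -lee_fin -(cvg_lim _ cv) //.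
apply: lime_ge; first exact: cvgP cv.
by apply: nearW => n; apply: prode_ge0 => i _; exact: measure_ge0.
Qed.

Lemma mu_star_ge0 A : 0 <= mu_star A.
Proof.
apply: le_ereal_inf_tmp => _ [C [v [fC [_ ->]]]].
by apply: nneseries_ge0 => n _ _; rewrite lee_fin; exact: finrect_ge0 (fC n).
Qed.

Lemma le_mu_star A B : A `<=` B -> mu_star A <= mu_star B.
Proof.
move=> AB; apply: le_ereal_inf_tmp => _ [C [v [fC [BC ->]]]].
by apply: mu_star_le_cover; split => //; exact: subset_trans BC.
Qed.

Lemma finrect_set0 : finrect (fun=> @set0 R) 0%R.
Proof.
split => [i|]; first exact: measurable0.
apply: cvg_near_cst; exists 1%N => // -[//|n] _.
by rewrite /partial_vol big_ord_recl measure0 mul0e.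
Qed.

Lemma mu_star_rect C v : finrect C v -> mu_star (rect C) <= v%:E.
Proof.
move=> fC; pose v' n := if n is 0%N then v else 0%R.
apply: le_trans (mu_star_le_cover (C := fun n => if n is 0%N then C else fun=> set0)
  (v := v') _) _.
  by split=> [[|n] //|x Cx]; [exact: finrect_set0|exists 0%N].
rewrite (nneseries_split 0 1); last first.
  by move=> [|n] _ //; rewrite lee_fin (finrect_ge0 fC).
by rewrite big_nat1 eseries0 ?adde0 // => -[].
Qed.

Lemma mu_star_sigma_subadditive (B : (set (nat -> R))^nat) :
  mu_star (\bigcup_n B n) <= \sum_(n <oo) mu_star (B n).
Proof.
have [[n Bn]|finB] := pselect (exists n, mu_star (B n) = +oo).
  rewrite (eseries_pinfty _ _ Bn) ?leey // => k _.
  by rewrite gt_eqF // (lt_le_trans ltNy0 (mu_star_ge0 _)).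
have {}finB n : mu_star (B n) \is a fin_num.
  by rewrite ge0_fin_numE ?mu_star_ge0 // ltey; apply/eqP => Bn; apply: finB; exists n.
apply/lee_addgt0Pr => e e0.
have /choice[G HG] n : exists Cv : (nat -> nat -> set R) * (nat -> R),
    rect_cover (B n) Cv.1 Cv.2 /\
    \sum_(k <oo) (Cv.2 k)%:E < mu_star (B n) + (e / (2 ^ n.+1)%:R)%:E.
  have : mu_star (B n) < mu_star (B n) + (e / (2 ^ n.+1)%:R)%:E.
    by rewrite lteDl // lte_fin divr_gt0.
  by move=> /mu_star_lt_cover[C [v cover]]; exists (C, v).
have /card_esym/ppcard_eqP[f] := card_nat2.
pose v i j := (G i).2 j.
have v0 i j : (0 <= v i j)%R by exact: finrect_ge0 ((HG i).1.1 j).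
apply: (@le_trans _ _ (\sum_(k <oo) (v (f k).1 (f k).2)%:E)).
  apply: mu_star_le_cover; split => [k|x [i _ /(HG i).1.2 [j _ Cx]]].
    exact: (HG (f k).1).1.1.
  by exists (f^-1%FUN (i, j)) => //; rewrite invK ?inE.
rewrite (nneseries_pair f (a := fun i j => (v i j)%:E)); last first.
  by move=> i j; rewrite lee_fin.
apply: le_trans (epsilon_trick _ _ (ltW e0)) => [|n]; last exact: mu_star_ge0.
apply: lee_nneseries => [i _ _|i _].
  by apply: nneseries_ge0 => j _ _; rewrite lee_fin.
exact: ltW (HG i).2.
Qed.

Lemma mu_star_null_cover A (B : (set (nat -> R))^nat) :
  A `<=` \bigcup_n B n -> (forall n, mu_star (B n) = 0) -> mu_star A = 0.
Proof.
move=> AB B0; apply/eqP; rewrite eq_le mu_star_ge0 andbT.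
apply: le_trans (le_mu_star AB) _; apply: le_trans (mu_star_sigma_subadditive B) _.
by rewrite eseries0.
Qed.

Definition slab (d : R) (k : nat) : set R :=
  `[(k%:R * d)%R, (k.+1%:R * d)%R] `|` `[(- (k.+1%:R * d))%R, (- (k%:R * d))%R].

Lemma measurable_slab d k : measurable (slab d k).
Proof. by apply: measurableU; exact: measurable_itv. Qed.

Lemma lebesgue_slab_le d k : (0 < d)%R -> lambda (slab d k) <= (d + d)%:E.
Proof.
move=> d0; set a := (k%:R * d)%R; set b := (k.+1%:R * d)%R.
apply: le_trans (measureU2 lambda (measurable_itv `[a, b])
  (measurable_itv `[(- b)%R, (- a)%R])) _.
change (lambda `[a, b] + lambda `[(- b)%R, (- a)%R] <= (d + d)%:E).
have ab : (a < b)%R by rewrite ltr_pM2r ?ltr_nat.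
rewrite !lebesgue_measure_itv /= !lte_fin ltrN2 ab -!EFinD lee_fin.
by rewrite /a /b -[k.+1]addn1 natrD mulrDl mul1r opprK; lra.
Qed.

Lemma slab_cover d x : (0 < d)%R -> exists k, slab d k x.
Proof.
move=> d0; have [k /andP[kx xk]] : exists k : nat, (k%:R <= `|x| / d < k.+1%:R)%R.
  by eexists; apply: truncn_itv; rewrite divr_ge0 // ltW.
rewrite ler_pdivlMr // in kx; rewrite ltr_pdivrMr // in xk.
exists k; rewrite /slab /= !in_itv /=; case: (leP 0%R x) => x0.
  by left; rewrite ger0_norm // in kx xk; rewrite kx ltW.
by right; rewrite ltr0_norm // in kx xk; apply/andP; split; lra.
Qed.

Lemma partial_volS C n :
  partial_vol C n.+1 = lambda (C 0%N) * partial_vol (fun i => C i.+1) n.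
Proof. by rewrite /partial_vol big_ord_recl. Qed.

Lemma finrect_head_pos C v : finrect C v -> (0 < v)%R ->
  exists2 a, lambda (C 0%N) = a%:E & (0 < a)%R.
Proof.
move=> [mC cv] v0; pose P n := partial_vol (fun i => C i.+1) n.
have P0 n : 0 <= P n by apply: prode_ge0 => i _; exact: measure_ge0.
have cvS : (fun n => lambda (C 0%N) * P n) @ \oo --> v%:E.
  have -> : (fun n => lambda (C 0%N) * P n) = (fun n => partial_vol C n.+1).
    by apply/funext => n; rewrite partial_volS.
  by rewrite (cvg_shiftS (partial_vol C)).
have v_eq0 : (\forall n \near \oo, lambda (C 0%N) * P n = 0) -> v = 0%R.
  move=> ev0; suff : 0 = v%:E by case.
  by rewrite -(lim_near_cst _ ev0) // (cvg_lim _ cvS).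
(* A first factor of measure 0 or +oo makes every partial product 0 or +oo. *)
case lC : (lambda (C 0%N)) => [a| |]; last 2 first.
- have [fin _] := (fine_cvgP _ _).1 cvS.
  suff /v_eq0 v_0 : \forall n \near \oo, lambda (C 0%N) * P n = 0.
    by move: v0; rewrite v_0 ltxx.
  apply: filterS fin => n; rewrite lC.
  have := P0 n; rewrite le_eqVlt => /orP[/eqP <-|Pn]; first by rewrite mule0.
  by rewrite gt0_mulye.
- have : 0 <= lambda (C 0%N) by exact: measure_ge0.
  by rewrite lC.
exists a => //; rewrite lt_neqAle -lee_fin -lC measure_ge0 andbT.
apply/eqP => a0; move: v0; rewrite v_eq0 ?ltxx //.
by apply: nearW => n; rewrite lC -a0 mul0e.
Qed.

Definition with_head (D0 : set R) C : nat -> set R :=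
  fun i => if i is 0%N then D0 else C i.

Lemma finrect_with_head C v a (D0 : set R) b : finrect C v ->
    lambda (C 0%N) = a%:E -> a != 0%R -> measurable D0 -> lambda D0 = b%:E ->
  finrect (with_head D0 C) (b * (v / a)).
Proof.
move=> [mC cv] Ca a0 mD0 D0b; split => [[|i] //|]; first exact: mC.
have cv_tail : partial_vol (fun i => C i.+1) @ \oo --> (v / a)%:E.
  have -> : partial_vol (fun i => C i.+1) = fun n => (a^-1)%:E * partial_vol C n.+1.
    by apply/funext => n; rewrite partial_volS Ca muleA -EFinM mulVf ?mul1e.
  by rewrite mulrC EFinM; apply: cvgeZl => //; rewrite (cvg_shiftS (partial_vol C)).
rewrite EFinM -cvg_shiftS.
have -> : (fun n => partial_vol (with_head D0 C) n.+1) =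
    (fun n => b%:E * partial_vol (fun i => C i.+1) n).
  by apply/funext => n; rewrite partial_volS D0b.
exact: (cvgeZl _ cv_tail).
Qed.

Lemma finrect_split C v eps : finrect C v -> (0 < eps)%R ->
  exists (D : nat -> nat -> set R) (w : nat -> R),
    rect_cover (rect C) D w /\ forall k, (w k < eps)%R.
Proof.
move=> fC eps0; have [v_lt|eps_le] := ltP v eps.
  by exists (fun=> C), (fun=> v); split=> //; split=> // x Cx; exists 0%N.
have v0 : (0 < v)%R := lt_le_trans eps0 eps_le.
have [a Ca a0] := finrect_head_pos fC v0.
(* Each slice then has volume at most (d + d) * (v / a) = eps / 2. *)
pose d := (eps * a / (4 * v))%R.
have d0 : (0 < d)%R by rewrite divr_gt0 ?mulr_gt0.
pose S k := C 0%N `&` slab d k.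
have mS k : measurable (S k) := measurableI _ _ (fC.1 0%N) (measurable_slab d k).
pose b k := fine (lambda (S k)).
have Sb k : lambda (S k) = (b k)%:E /\ (0 <= b k <= d + d)%R.
  have S0 : 0 <= lambda (S k) by exact: measure_ge0.
  have Sd : lambda (S k) <= (d + d)%:E.
    rewrite (le_trans _ (lebesgue_slab_le k d0)) //.
    apply: le_measure; rewrite ?inE; [exact: mS|exact: measurable_slab|].
    exact: subIsetr.
  have Sfin : lambda (S k) \is a fin_num.
    by rewrite ge0_fin_numE // (le_lt_trans Sd) ?ltry.
  by rewrite /b fineK // -lee_fin -[X in _ && X]lee_fin fineK // S0 Sd.
exists (fun k => with_head (S k) C), (fun k => b k * (v / a))%R.
split; [split|] => [k|x Cx|k].
- exact: finrect_with_head fC Ca (lt0r_neq0 a0) (mS k) (Sb k).1.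
- have [k Sk] := slab_cover (x 0%N) d0.
  by exists k => // -[|i] /=; [split; [exact: Cx|exact: Sk]|exact: Cx].
- have [_ /andP[b0 bd]] := Sb k.
  apply: (@le_lt_trans _ _ ((d + d) * (v / a))%R).
    by rewrite ler_wpM2r // divr_ge0 // ltW.
  have -> : ((d + d) * (v / a) = eps / 2)%R.
    by rewrite /d; field; rewrite !gt_eqF.
  lra.
Qed.

Section atom.
Variable A : set (nat -> R).
Hypothesis BinfA : Binf A.
Hypothesis atomA : forall B, Binf B -> B `<=` A ->
  mu_star B = 0 \/ mu_star B = mu_star A.

Lemma atom_cover_null B (G : (set (nat -> R))^nat) : B `<=` A ->
    (forall n, Binf (G n)) -> (forall n, mu_star (G n) < mu_star A) ->
  B `<=` \bigcup_n G n -> mu_star B = 0.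
Proof.
move=> BA BinfG GA BG; apply: (@mu_star_null_cover _ (fun n => A `&` G n)).
  by move=> x Bx; have [n _ Gx] := BG x Bx; exists n => //; split => //; exact: BA.
move=> n; have [//|AG_A] := atomA (BinfI BinfA (BinfG n)) (@subIsetl _ A (G n)).
by have := GA n; rewrite -AG_A ltNge le_mu_star //; exact: subIsetr.
Qed.

Lemma atom_mu_star_fin (F : (set (nat -> R))^nat) :
    (forall n, Binf (F n) /\ mu_star (F n) < +oo) -> A `<=` \bigcup_n F n ->
  mu_star A < +oo.
Proof.
move=> finF AF; rewrite ltey; apply/eqP => Aoo.
suff : mu_star A = 0 by rewrite Aoo.
apply: (@atom_cover_null A F) => // n; first exact: (finF n).1.
by rewrite Aoo; exact: (finF n).2.
Qed.

Lemma atom_fin_null : mu_star A < +oo -> mu_star A = 0.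
Proof.
move=> Afin; have [m Am] : exists m : R, mu_star A = m%:E.
  by exists (fine (mu_star A)); rewrite fineK // ge0_fin_numE // mu_star_ge0.
have [m_le0|m_gt0] := leP m 0%R.
  by apply/eqP; rewrite eq_le mu_star_ge0 Am lee_fin m_le0.
have [C [v [[finC AC] _]]] := mu_star_lt_cover Afin.
apply: (@mu_star_null_cover _ (fun n => A `&` rect (C n))).
  by move=> x Ax; have [n _ Cx] := AC x Ax; exists n.
move=> n; have [D [w [[finD CD] small]]] := finrect_split (finC n) m_gt0.
apply: (atom_cover_null (@subIsetl _ A _) _ _ (subset_trans (@subIsetr _ A _) CD)) => k.
  exact: Binf_rect (finD k).1.
by rewrite Am; apply: le_lt_trans (mu_star_rect (finD k)) _; rewrite lte_fin.
Qed.

End atom.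

End infinite_product.

Theorem corollaryA6 (R : realType) (E : set (nat -> R)) :
  Binf E -> sigma_finite_mu E -> purely_nonatomic E.
Proof.
move=> _ [F [-> finF]] [A [BinfA AF Apos atomA]].
have Afin := atom_mu_star_fin BinfA atomA finF AF.
by move: Apos; rewrite (atom_fin_null BinfA atomA Afin) ltxx.
Qed.
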